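(* Let $T$ be a $\mathcal P^{\mathbf A}$-theory and $\Phi(\overrightarrow x)$ a set of $\mathcal P^{\mathbf A}$-formulas. The following are equivalent: (i) for any models $\langle\mathbf A,\mathbf M\rangle\subseteq\langle\mathbf A,\mathbf N\rangle$ of $T$ and any tuple $\overrightarrow d$ of elements of $M$, if $\langle\mathbf A,\mathbf N\rangle\models\Phi[\overrightarrow d]$ then $\langle\mathbf A,\mathbf M\rangle\models\Phi[\overrightarrow d]$; (ii) there is a set $\Theta(\overrightarrow x)$ of universal $\mathcal P^{\mathbf A}$-formulas such that $T,\Phi\models\Theta$ and $T,\Theta\models\Phi$.
   Context: Fix a finite MTL-chain $\mathbf{A}$ (a finite linearly ordered MTL-algebra, possibly expanded with further operations), with top $1$ and bottom $0$. For a predicate language $\mathcal P$ containing a crisp equality symbol $\approx$, an $\mathbf{A}$-structure $\langle \mathbf A,\mathbf M\rangle$ consists of a nonempty domain $M$, functions $F_{\mathbf M}:M^n\to M$ for $n$-ary function symbols, and maps $P_{\mathbf M}:M^n\to A$ for $n$-ary predicate symbols; $\approx$ takes value $1$ on equal and $0$ on distinct elements. Truth values are computed Tarski-style: connectives by the operations of $\mathbf A$, $\forall$ by infimum, $\exists$ by supremum over the domain. $\langle\mathbf A,\mathbf M\rangle\models\Phi[\overrightarrow d]$ means every formula of $\Phi$ takes value $1$ at $\overrightarrow d$; a model of a theory (set of sentences) is a structure in which all its sentences take value $1$. $\mathcal P^{\mathbf A}$ is $\mathcal P$ expanded by a truth constant $\overline a$ for each $a\in A$, always interpreted as $a$; all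 structures are over the fixed $\mathbf A$. $\langle\mathbf A,\mathbf M\rangle\subseteq\langle\mathbf A,\mathbf N\rangle$ (substructure) means $M\subseteq N$ and function and predicate symbols are interpreted in $\mathbf M$ by restriction from $\mathbf N$. A universal formula has the form $(\forall\overrightarrow x)\psi$ with $\psi$ quantifier-free. $T,\Phi\models\Theta$ means: for every model $\langle\mathbf A,\mathbf M\rangle$ of $T$ and tuple $\overrightarrow d$ in $M$, if $\langle\mathbf A,\mathbf M\rangle\models\Phi[\overrightarrow d]$ then $\langle\mathbf A,\mathbf M\rangle\models\Theta[\overrightarrow d]$. *)

From Stdlib Require Import Classical ClassicalEpsilon.
From HB Require Import structures.
From mathcomp Require Import all_boot all_order.
Set Implicit Arguments. Unset Strict Implicit. Unset Printing Implicit Defensive.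
Import Order.TTheory.
Local Open Scope order_scope.

(* A finite, linearly ordered, bounded, integral, commutative residuated lattice
   (prelinearity holds automatically in a chain).  The lattice operations are
   min/max of the total order, 0 = \bot, 1 = \top. *)
Record MTLchain (disp : Order.disp_t) := {
  mcar :> finTBOrderType disp;
  mconj : mcar -> mcar -> mcar;
  mimp  : mcar -> mcar -> mcar;
  mconjC : commutative mconj;
  mconjA : associative mconj;
  mconj1 : left_id \top mconj;
  mres : forall a b c, (mconj a b <= c) = (a <= mimp b c);
  (* further operations of the (expanded) algebra *)
  mops : Type;
  mar  : mops -> nat;
  mop  : forall o, ('I_(mar o) -> mcar) -> mcar
}.

Record Lang := {
  fsym : Type; far : fsym -> nat;
  psym : Type; par : psym -> nat    (* predicate symbols (besides crisp equality) *)
}.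

Section Syntax.
Variables (disp : Order.disp_t) (A : MTLchain disp) (L : Lang).

Inductive term :=
| Var (k : nat)
| App (f : fsym L) (args : 'I_(far f) -> term).

Inductive formula :=
| Pred (p : psym L) (args : 'I_(par p) -> term)
| Eqf (t1 t2 : term)
| Cst (a : A)
| Conj (f1 f2 : formula)
| Imp (f1 f2 : formula)
| Wedge (f1 f2 : formula)
| Vee (f1 f2 : formula)
| Op (o : mops A) (args : 'I_(mar o) -> formula)
| All (x : nat) (f : formula)
| Ex (x : nat) (f : formula).

Fixpoint term_vars_in (P : nat -> Prop) (t : term) : Prop :=
  match t with
  | Var k => P k
  | App _ args => forall i, term_vars_in P (args i)
  end.

Fixpoint fv_in (P : nat -> Prop) (phi : formula) : Prop :=
  match phi with
  | Pred _ args => forall i, term_vars_in P (args i)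
  | Eqf t1 t2 => term_vars_in P t1 /\ term_vars_in P t2
  | Cst _ => True
  | Conj f1 f2 | Imp f1 f2 | Wedge f1 f2 | Vee f1 f2 => fv_in P f1 /\ fv_in P f2
  | Op _ args => forall i, fv_in P (args i)
  | All x f | Ex x f => fv_in (fun k => k = x \/ P k) f
  end.

Definition sentence (phi : formula) : Prop := fv_in (fun _ => False) phi.
Definition fv_below (n : nat) (phi : formula) : Prop := fv_in (fun k => (k < n)%N) phi.

Fixpoint qfree (phi : formula) : Prop :=
  match phi with
  | Pred _ _ | Eqf _ _ | Cst _ => True
  | Conj f1 f2 | Imp f1 f2 | Wedge f1 f2 | Vee f1 f2 => qfree f1 /\ qfree f2
  | Op _ args => forall i, qfree (args i)
  | All _ _ | Ex _ _ => False
  end.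

Definition universal (phi : formula) : Prop :=
  exists (xs : seq nat) (psi : formula), qfree psi /\ phi = foldr All psi xs.

End Syntax.

Definition decP (P : Prop) : bool :=
  if excluded_middle_informative P then true else false.

Record structure (disp : Order.disp_t) (A : MTLchain disp) (L : Lang) := {
  dom : Type;
  dom_inh : dom;
  ifun : forall f : fsym L, ('I_(far f) -> dom) -> dom;
  ipred : forall p : psym L, ('I_(par p) -> dom) -> A
}.

Section Semantics.
Variables (disp : Order.disp_t) (A : MTLchain disp) (L : Lang) (M : structure A L).

Definition infM (f : dom M -> A) : A :=
  \big[Order.min / \top]_(a : A | decP (exists m, f m = a)) a.
Definition supM (f : dom M -> A) : A :=
  \big[Order.max / \bot]_(a : A | decP (exists m, f m = a)) a.

Definition upd (v : nat -> dom M) (x : nat) (m : dom M) : nat -> dom M :=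
  fun k => if k == x then m else v k.

Fixpoint teval (v : nat -> dom M) (t : term L) : dom M :=
  match t with
  | Var k => v k
  | App f args => @ifun _ _ _ M f (fun i => teval v (args i))
  end.

Fixpoint eval (v : nat -> dom M) (phi : formula A L) : A :=
  match phi with
  | Pred p args => @ipred _ _ _ M p (fun i => teval v (args i))
  | Eqf t1 t2 => if decP (teval v t1 = teval v t2) then \top else \bot
  | Cst a => a
  | Conj f1 f2 => mconj (eval v f1) (eval v f2)
  | Imp f1 f2 => mimp (eval v f1) (eval v f2)
  | Wedge f1 f2 => Order.min (eval v f1) (eval v f2)
  | Vee f1 f2 => Order.max (eval v f1) (eval v f2)
  | Op o args => @mop _ A o (fun i => eval v (args i))
  | All x f => infM (fun m => eval (upd v x m) f)
  | Ex x f => supM (fun m => eval (upd v x m) f)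
  end.

Definition sat (Phi : formula A L -> Prop) (v : nat -> dom M) : Prop :=
  forall phi, Phi phi -> eval v phi = \top.

Definition models (T : formula A L -> Prop) : Prop :=
  forall phi, T phi -> forall v, eval v phi = \top.

End Semantics.
Arguments sat {disp A L} M Phi v.
Arguments models {disp A L} M T.
Arguments eval {disp A L} M v phi.
Arguments teval {disp A L} M v t.

Definition conseq (disp : Order.disp_t) (A : MTLchain disp) (L : Lang)
  (T Phi Theta : formula A L -> Prop) : Prop :=
  forall (M : structure A L), models M T ->
  forall v : nat -> dom M, sat M Phi v -> sat M Theta v.

Definition closedS (disp : Order.disp_t) (A : MTLchain disp) (L : Lang)
  (N : structure A L) (S : dom N -> Prop) : Prop :=
  forall (f : fsym L) (args : 'I_(far f) -> dom N),
    (forall i, S (args i)) -> S (@ifun _ _ _ N f args).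
Arguments closedS {disp A L} N S.

Definition substr (disp : Order.disp_t) (A : MTLchain disp) (L : Lang)
  (N : structure A L) (S : dom N -> Prop) (HS : closedS N S) (s0 : {x | S x})
  : structure A L :=
  {| dom := {x | S x};
     dom_inh := s0;
     ifun := fun f args =>
       exist S (@ifun _ _ _ N f (fun i => proj1_sig (args i)))
               (HS f (fun i => proj1_sig (args i)) (fun i => proj2_sig (args i)));
     ipred := fun p args => @ipred _ _ _ N p (fun i => proj1_sig (args i)) |}.

(* (ii) => (i).  A quantifier-free formula takes the same value in a
   substructure as in the superstructure (equality is crisp and the
   inclusion is injective), so universal formulas pass down to
   substructures; hence so does Phi.

   (i) => (ii).  Take for Theta all universal consequences of T and Phi in
   the variables x_0 .. x_{n-1}.  Let M be a model of T with Theta true at v.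
   Each finite fragment D of the (graded) diagram of M gives a universal
   formula "forall y, D(x, y) -> c", c the largest truth value below 1.  It
   fails in M, so it is not in Theta, so some model K_D of T satisfies Phi
   and D.  An ultraproduct of the K_D along an ultrafilter containing every
   cone {D' | D is contained in D'} is a model of T satisfying Phi (Łoś's
   theorem), and M embeds into it.  The image of M is a substructure and a
   model of T (being isomorphic to M); by (i) it satisfies Phi, hence so
   does M.  (If A is trivial every formula is true and there is nothing to
   prove.) *)

From Pilot Require Import Defs.
From mathcomp Require Import all_boot all_order.
From Stdlib Require Import Classical ClassicalEpsilon FunctionalExtensionality
  PropExtensionality ProofIrrelevance.
From mathcomp Require Import classical_sets filter.
Set Implicit Arguments. Unset Strict Implicit. Unset Printing Implicit Defensive.
Import Order.TTheory.
Local Open Scope order_scope.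

Lemma decPE (P : Prop) : Defs.decP P = true <-> P.
Proof. by rewrite /Defs.decP; case: excluded_middle_informative => // nP; split. Qed.

Lemma decPT (P : Prop) : P -> Defs.decP P = true.
Proof. by move/decPE. Qed.

Lemma decPF (P : Prop) : ~ P -> Defs.decP P = false.
Proof. by rewrite /Defs.decP; case: excluded_middle_informative. Qed.

Lemma decP_iff (P Q : Prop) : (P <-> Q) -> Defs.decP P = Defs.decP Q.
Proof. by move=> /propositional_extensionality ->. Qed.

Lemma sig_eqE (T : Type) (S : T -> Prop) (x y : {z | S z}) :
  x = y <-> proj1_sig x = proj1_sig y.
Proof.
split=> [-> //|]; case: x => x px; case: y => y py /= exy; subst y.
by rewrite (proof_irrelevance _ px py).
Qed.

(* Bridges between boolean membership in a [seq] and [List.In]; the latter is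
   needed for lists over types without decidable equality. *)
Lemma In_of_mem (T : eqType) (x : T) s : x \in s -> List.In x s.
Proof. by elim: s => //= a s IH; rewrite in_cons => /orP [/eqP ->|/IH]; [left|right]. Qed.

Lemma mem_of_In (T : eqType) (x : T) s : List.In x s -> x \in s.
Proof. by elim: s => //= a s IH [->|/IH]; rewrite in_cons ?eqxx // => ->; rewrite orbT. Qed.

Lemma In_flatten T (s : seq T) ss x :
  List.In s ss -> List.In x s -> List.In x (flatten ss).
Proof.
elim: ss => //= s' ss IH [-> xs|H xs]; apply: List.in_or_app; [left|right] => //.
exact: IH.
Qed.

Fixpoint position (T : Type) (m : T) (s : seq T) : nat :=
  match s with
  | [::] => 0
  | x :: s' => if Defs.decP (x = m) then 0 else (position m s').+1
  end.

Lemma nth_position T (d m : T) s :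
  List.In m s -> nth d s (position m s) = m /\ (position m s < size s)%N.
Proof.
elim: s => //= x s IH H.
case: (classic (x = m)) => [xm|nxm]; first by rewrite decPT.
rewrite decPF //=; case: H => [//|H]; exact: IH.
Qed.

Section NestedInduction.
Variables (disp : Order.disp_t) (A : MTLchain disp) (L : Lang).

Fixpoint term_nind (P : term L -> Prop) (HV : forall k, P (Var L k))
  (HA : forall f args, (forall i, P (args i)) -> P (@App L f args)) (t : term L) : P t :=
  match t with
  | Var k => HV k
  | App f args => HA f args (fun i => term_nind HV HA (args i))
  end.

Fixpoint formula_nind (P : formula A L -> Prop)
  (HP : forall p args, P (@Pred _ A L p args))
  (HE : forall t1 t2, P (@Eqf _ A L t1 t2))
  (HC : forall a, P (Cst L a))
  (HCj : forall f1 f2, P f1 -> P f2 -> P (Conj f1 f2))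
  (HI : forall f1 f2, P f1 -> P f2 -> P (Imp f1 f2))
  (HW : forall f1 f2, P f1 -> P f2 -> P (Wedge f1 f2))
  (HV : forall f1 f2, P f1 -> P f2 -> P (Vee f1 f2))
  (HO : forall o args, (forall i, P (args i)) -> P (@Op _ A L o args))
  (HAl : forall x f, P f -> P (All x f))
  (HEx : forall x f, P f -> P (Ex x f)) (phi : formula A L) : P phi :=
  let F := formula_nind HP HE HC HCj HI HW HV HO HAl HEx in
  match phi with
  | Pred p args => HP p args
  | Eqf t1 t2 => HE t1 t2
  | Cst a => HC a
  | Conj f1 f2 => HCj f1 f2 (F f1) (F f2)
  | Imp f1 f2 => HI f1 f2 (F f1) (F f2)
  | Wedge f1 f2 => HW f1 f2 (F f1) (F f2)
  | Vee f1 f2 => HV f1 f2 (F f1) (F f2)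
  | Op o args => HO o args (fun i => F (args i))
  | All x f => HAl x f (F f)
  | Ex x f => HEx x f (F f)
  end.
End NestedInduction.

Section TruthValues.
Variables (disp : Order.disp_t) (A : MTLchain disp) (L : Lang).

Lemma imp_top (x y : A) : mimp x y = \top <-> x <= y.
Proof.
have := mres \top x y; rewrite mconj1 => ->.
by rewrite le1x; split => [->|/eqP].
Qed.

Lemma min_top (x y : A) : Order.min x y = \top <-> x = \top /\ y = \top.
Proof.
split=> [H|[-> ->]]; last by rewrite minxx.
have : \top <= Order.min x y by rewrite H.
by rewrite le_min !le1x => /andP [/eqP -> /eqP ->].
Qed.

(* As A is finite, the infimum and supremum over a domain are attained; this
   is what makes them behave like first-order quantifiers. *)
Section Quantifiers.
Variable M : structure A L.
Implicit Type f : dom M -> A.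

Lemma infM_le f m : infM f <= f m.
Proof. by apply: bigmin_le_cond; apply/decPE; exists m. Qed.

Lemma infM_att f : exists m, infM f = f m.
Proof.
have Pm : Defs.decP (exists m, f m = f (dom_inh M)) by apply/decPE; exists (dom_inh M).
rewrite /infM (bigmin_eq_arg _ _ _ _ Pm); last by move=> *; exact: lex1.
by case: arg_minP => //= a /decPE [m <-] _; exists m.
Qed.

Lemma infM_ge f a : (forall m, a <= f m) -> a <= infM f.
Proof. by move=> H; have [m ->] := infM_att f; exact: H. Qed.

Lemma infM_top f : infM f = \top <-> forall m, f m = \top.
Proof.
split=> [H m|H]; apply/eqP; rewrite -le1x; first by rewrite -H infM_le.
by apply: infM_ge => m; rewrite H.
Qed.

Lemma supM_ge f m : f m <= supM f.
Proof. by apply: le_bigmax_cond; apply/decPE; exists m. Qed.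

Lemma supM_att f : exists m, supM f = f m.
Proof.
have Pm : Defs.decP (exists m, f m = f (dom_inh M)) by apply/decPE; exists (dom_inh M).
rewrite /supM (bigmax_eq_arg _ _ _ _ Pm); last by move=> *; exact: le0x.
by case: arg_maxP => //= a /decPE [m <-] _; exists m.
Qed.

Lemma supM_le f a : (forall m, f m <= a) -> supM f <= a.
Proof. by move=> H; have [m ->] := supM_att f; exact: H. Qed.
End Quantifiers.

Lemma infM_range (M M' : structure A L) (f : dom M -> A) (f' : dom M' -> A) :
  (forall a, (exists m, f m = a) <-> (exists m', f' m' = a)) -> infM f = infM f'.
Proof. by move=> E; apply: eq_bigl => a; exact: decP_iff. Qed.

Lemma supM_range (M M' : structure A L) (f : dom M -> A) (f' : dom M' -> A) :
  (forall a, (exists m, f m = a) <-> (exists m', f' m' = a)) -> supM f = supM f'.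
Proof. by move=> E; apply: eq_bigl => a; exact: decP_iff. Qed.

End TruthValues.

Section Evaluation.
Variables (disp : Order.disp_t) (A : MTLchain disp) (L : Lang).
Implicit Types (phi psi : formula A L).

Lemma term_vars_mono (P Q : nat -> Prop) (t : term L) :
  (forall k, P k -> Q k) -> term_vars_in P t -> term_vars_in Q t.
Proof. by move=> PQ; elim/term_nind: t => [k|f args IH] /=; [exact: PQ|move=> H i; exact: IH]. Qed.

Lemma fv_mono phi : forall (P Q : nat -> Prop),
  (forall k, P k -> Q k) -> fv_in P phi -> fv_in Q phi.
Proof.
elim/formula_nind: phi => /=.
- by move=> p args P Q PQ H i; exact: (term_vars_mono PQ).
- by move=> t1 t2 P Q PQ [H1 H2]; split; exact: (term_vars_mono PQ).
- by [].
all: try by move=> f1 f2 IH1 IH2 P Q PQ [H1 H2]; split; [exact: (IH1 P Q)|exact: (IH2 P Q)].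
- by move=> o args IH P Q PQ H i; exact: (IH i P Q).
all: by move=> x f IH P Q PQ; apply: IH => k [->|/PQ]; [left|right].
Qed.

Section OneStructure.
Variable M : structure A L.

Lemma teval_agree (P : nat -> Prop) (t : term L) (v w : nat -> dom M) :
  term_vars_in P t -> (forall k, P k -> v k = w k) -> teval M v t = teval M w t.
Proof.
move=> + E; elim/term_nind: t => [k|f args IH] /=; first exact: E.
by move=> H; congr (ifun _); apply: functional_extensionality => i; exact: IH.
Qed.

Lemma upd_agree (P : nat -> Prop) (v w : nat -> dom M) x m :
  (forall k, P k -> v k = w k) ->
  forall k, k = x \/ P k -> upd v x m k = upd w x m k.
Proof.
move=> E k H; rewrite /upd; case: eqP => // /eqP nkx.
by case: H => [kx|]; [rewrite kx eqxx in nkx|exact: E].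
Qed.

Lemma eval_agree phi : forall (P : nat -> Prop) (v w : nat -> dom M),
  fv_in P phi -> (forall k, P k -> v k = w k) -> eval M v phi = eval M w phi.
Proof.
elim/formula_nind: phi => /=.
- move=> p args P v w H E; congr (ipred _); apply: functional_extensionality => i.
  exact: (teval_agree (H i)).
- by move=> t1 t2 P v w [H1 H2] E; rewrite (teval_agree H1 E) (teval_agree H2 E).
- by [].
all: try by move=> f1 f2 IH1 IH2 P v w [H1 H2] E; rewrite (IH1 P v w H1 E) (IH2 P v w H2 E).
- move=> o args IH P v w H E; congr (mop _); apply: functional_extensionality => i.
  exact: (IH i P).
- move=> x f IH P v w H E; congr infM; apply: functional_extensionality => m.
  exact: (IH _ _ _ H (upd_agree m E)).
- move=> x f IH P v w H E; congr supM; apply: functional_extensionality => m.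
  exact: (IH _ _ _ H (upd_agree m E)).
Qed.

Lemma eval_closure_top (xs : seq nat) psi (v : nat -> dom M) :
  eval M v (foldr (@All _ A L) psi xs) = \top <->
  forall w, (forall k, k \notin xs -> w k = v k) -> eval M w psi = \top.
Proof.
elim: xs v => [|x xs IH] v /=.
  split=> [H w E|]; last by apply.
  by have -> : w = v by apply: functional_extensionality => k; exact: E.
rewrite infM_top; split=> [H w E|H m].
- apply: (proj1 (IH (upd v x (w x))) (H (w x))) => k nk.
  rewrite /upd; case: eqP => [-> //|/eqP nkx].
  by apply: E; rewrite in_cons negb_or nkx.
- apply/IH => w E; apply: H => k; rewrite in_cons negb_or => /andP [nkx nk].
  by rewrite E // /upd (negbTE nkx).
Qed.
End OneStructure.
End Evaluation.

Section Substructures.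
Variables (disp : Order.disp_t) (A : MTLchain disp) (L : Lang).
Variables (N : structure A L) (S : dom N -> Prop) (HS : closedS N S) (s0 : {x | S x}).
Let Sub := substr HS s0.

Lemma teval_substr (v : nat -> dom Sub) (t : term L) :
  proj1_sig (teval Sub v t) = teval N (fun k => proj1_sig (v k)) t.
Proof.
elim/term_nind: t => [k|f args IH] //=.
by congr (ifun _); apply: functional_extensionality => i; exact: IH.
Qed.

Lemma eval_substr_qfree (phi : formula A L) (v : nat -> dom Sub) :
  qfree phi -> eval Sub v phi = eval N (fun k => proj1_sig (v k)) phi.
Proof.
elim/formula_nind: phi => //=.
- move=> p args _; congr (ipred _); apply: functional_extensionality => i.
  exact: teval_substr.
- by move=> t1 t2 _; rewrite (decP_iff (sig_eqE _ _)) !teval_substr.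
all: try by move=> f1 f2 IH1 IH2 [H1 H2]; rewrite IH1 // IH2.
by move=> o args IH H; congr (mop _); apply: functional_extensionality => i; exact: IH.
Qed.

Lemma universal_substr (th : formula A L) (v : nat -> dom Sub) :
  universal th -> eval N (fun k => proj1_sig (v k)) th = \top -> eval Sub v th = \top.
Proof.
case=> xs [psi [qpsi ->]] /eval_closure_top H; apply/eval_closure_top => w E.
by rewrite eval_substr_qfree //; apply: H => k nk; rewrite E.
Qed.
End Substructures.

Section Isomorphism.
Variables (disp : Order.disp_t) (A : MTLchain disp) (L : Lang).
Variables (M M' : structure A L) (h : dom M -> dom M').
Hypotheses (h_inj : injective h) (h_surj : forall y, exists x, h x = y)
  (h_fun : forall f ms, h (@ifun _ _ _ M f ms) = @ifun _ _ _ M' f (fun i => h (ms i)))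
  (h_pred : forall p ms, @ipred _ _ _ M' p (fun i => h (ms i)) = @ipred _ _ _ M p ms).

Lemma teval_iso (v : nat -> dom M) t : teval M' (fun k => h (v k)) t = h (teval M v t).
Proof.
elim/term_nind: t => [k|f args IH] //=.
by rewrite h_fun; congr (ifun _); apply: functional_extensionality => i; exact: IH.
Qed.

Lemma range_iso (f' : dom M' -> A) (f : dom M -> A) :
  (forall m, f' (h m) = f m) ->
  forall a, (exists m, f m = a) <-> (exists m', f' m' = a).
Proof.
move=> E a; split=> [[m <-]|[m' <-]]; first by exists (h m).
by have [m <-] := h_surj m'; exists m.
Qed.

Lemma eval_iso (phi : formula A L) : forall v : nat -> dom M,
  eval M' (fun k => h (v k)) phi = eval M v phi.
Proof.
have upd_h v x m : upd (fun k => h (v k)) x (h m) = (fun k => h (upd v x m k)).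
  by apply: functional_extensionality => k; rewrite /upd; case: eqP.
elim/formula_nind: phi => /=.
- move=> p args v; rewrite -h_pred; congr (ipred _).
  by apply: functional_extensionality => i; exact: teval_iso.
- move=> t1 t2 v; rewrite !teval_iso; congr (if _ then _ else _); apply: decP_iff.
  by split=> [/h_inj|->].
- by [].
all: try by move=> f1 f2 IH1 IH2 v; rewrite IH1 IH2.
- by move=> o args IH v; congr (mop _); apply: functional_extensionality => i; exact: IH.
- by move=> x f IH v; apply/esym/infM_range/range_iso => m; rewrite upd_h IH.
- by move=> x f IH v; apply/esym/supM_range/range_iso => m; rewrite upd_h IH.
Qed.

Lemma models_iso (T : formula A L -> Prop) : models M T -> models M' T.
Proof.
move=> HM phi Tphi V'; have [W HW] := boolp.choice (fun k => h_surj (V' k)).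
have -> : V' = (fun k => h (W k)) by apply: functional_extensionality => k; rewrite HW.
by rewrite eval_iso; exact: HM.
Qed.
End Isomorphism.

Section EmbeddingImage.
Variables (disp : Order.disp_t) (A : MTLchain disp) (L : Lang).
Variables (M N : structure A L) (h : dom M -> dom N).
Hypotheses (h_inj : injective h)
  (h_fun : forall f ms, h (@ifun _ _ _ M f ms) = @ifun _ _ _ N f (fun i => h (ms i)))
  (h_pred : forall p ms, @ipred _ _ _ N p (fun i => h (ms i)) = @ipred _ _ _ M p ms).

Definition image (y : dom N) : Prop := exists m, h m = y.

Lemma image_closed : closedS N image.
Proof.
move=> f args Hargs; have [pre Hpre] := boolp.choice Hargs.
exists (@ifun _ _ _ M f pre); rewrite h_fun; congr (ifun _).
by apply: functional_extensionality => j; exact: Hpre.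
Qed.

Definition image_str : structure A L :=
  substr image_closed (exist image (h (dom_inh M)) (ex_intro _ _ erefl)).

Definition to_image (m : dom M) : dom image_str := exist image (h m) (ex_intro _ m erefl).

Lemma to_image_inj : injective to_image.
Proof. by move=> x y /sig_eqE /h_inj. Qed.

Lemma to_image_surj (y : dom image_str) : exists x, to_image x = y.
Proof. by case: y => y [m Em]; exists m; apply/sig_eqE. Qed.

Lemma to_image_fun f ms :
  to_image (@ifun _ _ _ M f ms) = @ifun _ _ _ image_str f (fun i => to_image (ms i)).
Proof. by apply/sig_eqE; exact: h_fun. Qed.

Lemma eval_image (phi : formula A L) (w : nat -> dom M) :
  eval image_str (fun k => to_image (w k)) phi = eval M w phi.
Proof. exact: (eval_iso to_image_inj to_image_surj to_image_fun h_pred). Qed.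

Lemma models_image (T : formula A L -> Prop) : models M T -> models image_str T.
Proof. exact: (models_iso to_image_inj to_image_surj to_image_fun h_pred). Qed.
End EmbeddingImage.

Record ultrafilter (I : Type) := Ultrafilter {
  umem :> (I -> Prop) -> Prop;
  ultraI : forall X Y, umem X -> umem Y -> umem (fun i => X i /\ Y i);
  ultraS : forall X Y : I -> Prop, (forall i, X i -> Y i) -> umem X -> umem Y;
  ultra_false : ~ umem (fun _ => False);
  ultraC : forall X, umem X \/ umem (fun i => ~ X i) }.
Arguments ultraI {I u X Y}.
Arguments ultraS {I u X Y}.
Arguments ultra_false {I} u.
Arguments ultraC {I} u X.

(* Every directed family B of nonempty sets is contained in an ultrafilter
   (the ultrafilter lemma of the library, applied to the filter generated
   by B). *)
Lemma ultrafilter_above (J I : Type) (B : J -> I -> Prop) (j0 : J) :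
  (forall j1 j2, exists j, forall x, B j x -> B j1 x /\ B j2 x) ->
  (forall j, exists x, B j x) ->
  exists U : ultrafilter I, forall j, U (B j).
Proof.
move=> Bdir Bne.
have FB : Filter (filter_from setT B).
  apply: filter_fromT_filter; first by exists j0.
  by move=> j1 j2; have [j Hj] := Bdir j1 j2; exists j => x /Hj.
have PB : ProperFilter (filter_from setT B).
  by apply: filter_from_proper => j _; have [x Hx] := Bne j; exists x.
have [G [UG BG]] := ultraFilterLemma PB.
have PG := @ultra_proper _ _ UG.
exists (@Ultrafilter I G (fun X Y => @filterI _ G _ X Y) (fun X Y XY => @filterS _ G _ X Y XY)
  (@filter_not_empty _ G PG) (fun X => in_ultra_setVsetC X UG)).
by move=> j; apply: BG; exists j.
Qed.

Lemma cone_ultrafilter (X : Type) :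
  exists U : ultrafilter (seq X), forall D, U (fun D' => forall a, List.In a D -> List.In a D').
Proof.
apply: ultrafilter_above [::] _ _ => [D1 D2|D]; last by exists D.
by exists (D1 ++ D2) => D' H; split=> a Ha; apply: H; apply: List.in_or_app; [left|right].
Qed.

Section UltrafilterFacts.
Variables (I : Type) (U : ultrafilter I).

Lemma ultraT : U (fun _ => True).
Proof. by case: (ultraC U (fun _ => False)) => // H; apply: ultraS H. Qed.

Lemma ultra_witness X : U X -> exists i, X i.
Proof.
move=> H; apply: NNPP => nH; case: (ultra_false U); apply: ultraS H => i Xi.
by apply: nH; exists i.
Qed.

Lemma ultra_all_seq (T : eqType) (s : seq T) (X : T -> I -> Prop) :
  (forall j, j \in s -> U (X j)) -> U (fun i => forall j, j \in s -> X j i).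
Proof.
elim: s => [|a s IH] H; first by apply: ultraS ultraT => i _ j; rewrite in_nil.
have Ha := H a (mem_head a s).
have Hs : U (fun i => forall j, j \in s -> X j i).
  by apply: IH => j js; apply: H; rewrite in_cons js orbT.
apply: ultraS (ultraI Ha Hs) => i [Xa Xs] j.
by rewrite in_cons => /orP [/eqP -> //|]; exact: Xs.
Qed.

Lemma ultra_all_fin (T : finType) (X : T -> I -> Prop) :
  (forall j, U (X j)) -> U (fun i => forall j, X j i).
Proof.
move=> H; apply: ultraS (@ultra_all_seq T (enum T) X (fun j _ => H j)) => i Hi j.
by apply: Hi; rewrite mem_enum.
Qed.
End UltrafilterFacts.
Arguments ultraT {I} U.

Section Ultraproduct.
Variables (disp : Order.disp_t) (A : MTLchain disp) (L : Lang).
Variables (I : Type) (U : ultrafilter I) (N : I -> structure A L).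

Definition point := forall i, dom (N i).
Definition equ (f g : point) : Prop := U (fun i => f i = g i).

(* Elements of the ultraproduct are the equ-classes, represented as sets. *)
Definition udom := {P : point -> Prop | exists f, P = equ f}.
Definition uclass (f : point) : udom := exist _ (equ f) (ex_intro _ f erefl).
Definition point_inh : point := fun i => dom_inh (N i).
Definition rep (x : udom) : point := epsilon (inhabits point_inh) (proj1_sig x).

Lemma equ_refl f : equ f f.
Proof. exact: ultraS (ultraT U). Qed.

Lemma equ_sym f g : equ f g -> equ g f.
Proof. exact: ultraS. Qed.

Lemma equ_trans f g h : equ f g -> equ g h -> equ f h.
Proof. by move=> H1 H2; apply: ultraS (ultraI H1 H2) => i [-> ->]. Qed.

Lemma equ_ext f g : equ f g -> equ f = equ g.
Proof.
move=> H; apply: functional_extensionality => h; apply: propositional_extensionality.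
by split=> H'; [exact: equ_trans (equ_sym H) H'|exact: equ_trans H H'].
Qed.

Lemma uclass_eq f g : equ f g -> uclass f = uclass g.
Proof. by move=> H; apply/sig_eqE; exact: equ_ext. Qed.

Lemma uclass_inj f g : uclass f = uclass g -> equ f g.
Proof. by move/sig_eqE => /= ->; exact: equ_refl. Qed.

Lemma rep_uclass f : equ (rep (uclass f)) f.
Proof.
apply: equ_sym; apply: (epsilon_spec (inhabits point_inh) (equ f)).
by exists f; exact: equ_refl.
Qed.

Lemma uclass_rep x : uclass (rep x) = x.
Proof.
apply/sig_eqE => /=; have [f Pf] := proj2_sig x.
have H : proj1_sig x (rep x).
  by apply: (epsilon_spec (inhabits point_inh)); exists f; rewrite Pf; exact: equ_refl.
by rewrite Pf in H *; apply: equ_ext; exact: equ_sym.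
Qed.

(* The U-limit of a family of truth values: A is finite, so exactly one
   value is taken U-almost everywhere. *)
Definition ulim (g : I -> A) : A := epsilon (inhabits \top) (fun a => U (fun i => g i = a)).

Lemma ulim_spec g : U (fun i => g i = ulim g).
Proof.
apply: (epsilon_spec (inhabits (\top : A)) (fun a => U (fun i => g i = a))).
apply: NNPP => nH; case: (ultra_false U).
have Hne (a : A) : U (fun i => g i <> a).
  by case: (ultraC U (fun i => g i = a)) => // Ha; case: nH; exists a.
by apply: ultraS (ultra_all_fin Hne) => i /(_ (g i)).
Qed.

Lemma ulim_eq g a : U (fun i => g i = a) -> ulim g = a.
Proof. by move=> H; have [i [<- ->]] := ultra_witness (ultraI H (ulim_spec g)). Qed.

Lemma ulim_ext g h : U (fun i => g i = h i) -> ulim g = ulim h.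
Proof. by move=> H; apply: ulim_eq; apply: ultraS (ultraI H (ulim_spec h)) => i [-> ->]. Qed.

Lemma ulim_const a : ulim (fun _ => a) = a.
Proof. exact/ulim_eq/ultraS/ultraT. Qed.

Lemma ulim_le g h : (forall i, g i <= h i) -> ulim g <= ulim h.
Proof.
by move=> H; have [i [<- <-]] := ultra_witness (ultraI (ulim_spec g) (ulim_spec h)).
Qed.

Lemma ulimF (k : nat) (op : ('I_k -> A) -> A) (G : 'I_k -> I -> A) :
  ulim (fun i => op (fun j => G j i)) = op (fun j => ulim (G j)).
Proof.
apply: ulim_eq; apply: ultraS (ultra_all_fin (fun j => ulim_spec (G j))) => i Hi.
by congr op; apply: functional_extensionality => j; exact: Hi.
Qed.

Lemma ulim2 (op : A -> A -> A) g h :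
  ulim (fun i => op (g i) (h i)) = op (ulim g) (ulim h).
Proof. by apply: ulim_eq; apply: ultraS (ultraI (ulim_spec g) (ulim_spec h)) => i [-> ->]. Qed.

Definition uprod : structure A L :=
  {| dom := udom;
     dom_inh := uclass point_inh;
     ifun := fun f args => uclass (fun i => @ifun _ _ _ (N i) f (fun j => rep (args j) i));
     ipred := fun p args => ulim (fun i => @ipred _ _ _ (N i) p (fun j => rep (args j) i)) |}.

Definition rv (V : nat -> dom uprod) (i : I) : nat -> dom (N i) := fun k => rep (V k) i.

Lemma rv_upd (V : nat -> dom uprod) x m i : rv (upd V x m) i = upd (rv V i) x (rep m i).
Proof. by apply: functional_extensionality => k; rewrite /rv /upd; case: eqP. Qed.

Lemma teval_uprod (V : nat -> dom uprod) (t : term L) :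
  teval uprod V t = uclass (fun i => teval (N i) (rv V i) t).
Proof.
elim/term_nind: t => [k|f args IH] /=; first by rewrite uclass_rep.
apply: uclass_eq.
have H j : U (fun i => rep (teval uprod V (args j)) i = teval (N i) (rv V i) (args j)).
  by rewrite IH; exact: rep_uclass.
apply: ultraS (ultra_all_fin H) => i Hi; congr (ifun _).
by apply: functional_extensionality => j; exact: Hi.
Qed.

Lemma rep_teval_uprod (V : nat -> dom uprod) (t : term L) :
  U (fun i => rep (teval uprod V t) i = teval (N i) (rv V i) t).
Proof. by rewrite teval_uprod; exact: rep_uclass. Qed.

(* The quantifier steps of Łoś's theorem: a coordinatewise choice of
   witnesses is a witness in the ultraproduct. *)
Lemma ulim_infM (G : forall i, dom (N i) -> A) :
  infM (fun m : dom uprod => ulim (fun i => G i (rep m i))) = ulim (fun i => infM (G i)).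
Proof.
pose mp : point := fun i => epsilon (inhabits (dom_inh (N i))) (fun y => infM (G i) = G i y).
have mpE i : infM (G i) = G i (mp i) := epsilon_spec _ _ (infM_att (G i)).
have Emp : ulim (fun i => G i (rep (uclass mp) i)) = ulim (fun i => infM (G i)).
  by apply: ulim_ext; apply: ultraS (rep_uclass mp) => i ->.
apply: le_anti; apply/andP; split; first by rewrite -Emp; exact: infM_le.
by apply: infM_ge => m; apply: ulim_le => i; exact: infM_le.
Qed.

Lemma ulim_supM (G : forall i, dom (N i) -> A) :
  supM (fun m : dom uprod => ulim (fun i => G i (rep m i))) = ulim (fun i => supM (G i)).
Proof.
pose mp : point := fun i => epsilon (inhabits (dom_inh (N i))) (fun y => supM (G i) = G i y).
have mpE i : supM (G i) = G i (mp i) := epsilon_spec _ _ (supM_att (G i)).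
have Emp : ulim (fun i => G i (rep (uclass mp) i)) = ulim (fun i => supM (G i)).
  by apply: ulim_ext; apply: ultraS (rep_uclass mp) => i ->.
apply: le_anti; apply/andP; split; last by rewrite -Emp; exact: supM_ge.
by apply: supM_le => m; apply: ulim_le => i; exact: supM_ge.
Qed.

Theorem los (phi : formula A L) : forall V : nat -> dom uprod,
  eval uprod V phi = ulim (fun i => eval (N i) (rv V i) phi).
Proof.
have eval_upd (f : formula A L) V x :
  (forall V, eval uprod V f = ulim (fun i => eval (N i) (rv V i) f)) ->
  (fun m => eval uprod (upd V x m) f) =
  (fun m : dom uprod => ulim (fun i => eval (N i) (upd (rv V i) x (rep m i)) f)).
  move=> IH; apply: functional_extensionality => m; rewrite IH; congr ulim.
  by apply: functional_extensionality => i; rewrite rv_upd.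
elim/formula_nind: phi => /=.
- move=> p args V; apply: ulim_ext.
  apply: ultraS (ultra_all_fin (fun j => rep_teval_uprod V (args j))) => i Hi.
  congr (ipred _).
  by apply: functional_extensionality => j; exact: Hi.
- move=> t1 t2 V; rewrite !teval_uprod.
  set g1 := fun i => _; set g2 := fun i => _.
  case: (classic (equ g1 g2)) => H.
    rewrite decPT; last exact: uclass_eq; apply/esym/ulim_eq.
    by apply: ultraS H => i Hi; rewrite decPT.
  rewrite decPF; last by move/uclass_inj.
  case: (ultraC U (fun i => g1 i = g2 i)) => // H'; apply/esym/ulim_eq.
  by apply: ultraS H' => i Hi; rewrite decPF.
- by move=> a V; rewrite ulim_const.
all: try by move=> f1 f2 IH1 IH2 V; rewrite IH1 IH2 ulim2.
- move=> o args IH V; rewrite (ulimF (@mop _ A o) (fun j i => eval (N i) (rv V i) (args j))).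
  by congr (mop _); apply: functional_extensionality => j; exact: IH.
- move=> x f IH V; rewrite (eval_upd _ _ _ IH).
  exact: (ulim_infM (fun i y => eval (N i) (upd (rv V i) x y) f)).
- move=> x f IH V; rewrite (eval_upd _ _ _ IH).
  exact: (ulim_supM (fun i y => eval (N i) (upd (rv V i) x y) f)).
Qed.

Corollary los_top (phi : formula A L) (V : nat -> dom uprod) :
  U (fun i => eval (N i) (rv V i) phi = \top) -> eval uprod V phi = \top.
Proof. by move=> H; rewrite los; exact: ulim_eq. Qed.

Corollary models_uprod (T : formula A L -> Prop) :
  (forall i, models (N i) T) -> models uprod T.
Proof. by move=> HN phi Tphi V; apply: los_top; apply: ultraS (ultraT U) => i _; exact: HN. Qed.
End Ultraproduct.

Section Connectives.
Variables (disp : Order.disp_t) (A : MTLchain disp) (L : Lang).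

Definition biimp (a b : formula A L) : formula A L := Wedge (Imp a b) (Imp b a).
Definition bigWedge (l : seq (formula A L)) : formula A L :=
  foldr (@Wedge _ A L) (Cst L \top) l.

Lemma eval_biimp_top (K : structure A L) w a b :
  eval K w (biimp a b) = \top <-> eval K w a = eval K w b.
Proof.
rewrite /biimp /= min_top !imp_top.
by split=> [[h1 h2]|->]; [apply: le_anti; rewrite h1 h2|rewrite lexx].
Qed.

Lemma eval_bigWedge_top (K : structure A L) w l :
  eval K w (bigWedge l) = \top <-> forall psi, List.In psi l -> eval K w psi = \top.
Proof.
elim: l => [|a l IH] /=; first by split.
rewrite min_top IH; split=> [[h1 h2] psi [<-|]|H]; [exact: h1|exact: h2|].
by split=> [|psi Hp]; apply: H; [left|right].
Qed.

Lemma qfree_bigWedge l : (forall psi, List.In psi l -> qfree psi) -> qfree (bigWedge l).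
Proof.
elim: l => [|a l IH] //= H; split; first by apply: H; left.
by apply: IH => psi Hp; apply: H; right.
Qed.

Lemma fv_bigWedge P l : (forall psi, List.In psi l -> fv_in P psi) -> fv_in P (bigWedge l).
Proof.
elim: l => [|a l IH] //= H; split; first by apply: H; left.
by apply: IH => psi Hp; apply: H; right.
Qed.

Lemma fv_closure xs : forall P (psi : formula A L),
  fv_in (fun k => k \in xs \/ P k) psi -> fv_in P (foldr (@All _ A L) psi xs).
Proof.
elim: xs => [|x xs IH] P psi /= H.
  by apply: fv_mono H => k [|//]; rewrite in_nil.
apply: IH; apply: fv_mono H => k; rewrite in_cons => -[/orP [/eqP ->|kx]|Pk].
- by right; left.
- by left.
- by right; right.
Qed.
End Connectives.

Section BelowTop.
Variables (disp : Order.disp_t) (A : MTLchain disp).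

Definition below_top : A := \big[Order.max / \bot]_(a : A | a < \top) a.

Lemma imp_below_top (Hnt : (\bot : A) != \top) (x : A) : mimp x below_top = \top <-> x < \top.
Proof.
have lt_top : below_top < \top.
  by apply/bigmax_ltP; split=> //; rewrite lt_neqAle Hnt le0x.
rewrite imp_top; split=> [h|h]; first exact: le_lt_trans h lt_top.
exact: le_bigmax_cond.
Qed.
End BelowTop.

Lemma eval_Eqf_top (disp : Order.disp_t) (A : MTLchain disp) (L : Lang)
    (Hnt : (\bot : A) != \top) (K : structure A L) w (t1 t2 : term L) :
  eval K w (Eqf A t1 t2) = \top -> teval K w t1 = teval K w t2.
Proof.
rewrite /=; case: (classic (teval K w t1 = teval K w t2)) => // ne.
by rewrite decPF // => /eqP; rewrite (negbTE Hnt).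
Qed.

Section Diagram.
Variables (disp : Order.disp_t) (A : MTLchain disp) (L : Lang).
Variables (n : nat) (M : structure A L) (v : nat -> dom M).

Inductive diag_atom : Type :=
| DFun (f : Defs.fsym L) of ('I_(far f) -> dom M)
| DPred (p : Defs.psym L) of ('I_(par p) -> dom M)
| DEq of dom M & dom M.

Definition atom_elems (a : diag_atom) : seq (dom M) :=
  match a with
  | DFun f ms => map ms (enum 'I_(far f)) ++ [:: @ifun _ _ _ M f ms]
  | DPred p ms => map ms (enum 'I_(par p))
  | DEq m1 m2 => [:: m1; m2]
  end.

(* The elements mentioned by a fragment D, the parameters first; an element
   is named by the variable indexed by its position in this list. *)
Definition elems (D : seq diag_atom) : seq (dom M) :=
  map v (iota 0 n) ++ flatten (map atom_elems D).

Definition var_of (E : seq (dom M)) (m : dom M) : term L := Var L (position m E).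

Definition atom_formula (E : seq (dom M)) (a : diag_atom) : formula A L :=
  match a with
  | DFun f ms => Eqf A (@App L f (fun j => var_of E (ms j))) (var_of E (@ifun _ _ _ M f ms))
  | DPred p ms => biimp (@Pred _ A L p (fun j => var_of E (ms j))) (Cst L (@ipred _ _ _ M p ms))
  | DEq m1 m2 => if Defs.decP (m1 = m2) then Cst L \top
                 else Imp (Eqf A (var_of E m1) (var_of E m2)) (Cst L \bot)
  end.

(* x_k names the parameter v k. *)
Definition param_eqs (E : seq (dom M)) : seq (formula A L) :=
  map (fun k => Eqf A (Var L k) (var_of E (v k))) (iota 0 n).

Definition diagram (D : seq diag_atom) : formula A L :=
  bigWedge (map (atom_formula (elems D)) D ++ param_eqs (elems D)).

(* forall y, D(x, y) -> c, where y are the variables naming non-parameters. *)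
Definition refutation (D : seq diag_atom) : formula A L :=
  foldr (@All _ A L) (Imp (diagram D) (Cst L (below_top A)))
        (iota n (size (elems D) - n)).

Lemma In_enum_map k (ms : 'I_k -> dom M) j : List.In (ms j) (map ms (enum 'I_k)).
Proof. by apply: List.in_map; apply: In_of_mem; rewrite mem_enum. Qed.

Lemma In_elems_atom D a m :
  List.In a D -> List.In m (atom_elems a) -> List.In m (elems D).
Proof.
move=> Ha Hm; apply: List.in_or_app; right; apply: In_flatten Hm.
exact: List.in_map.
Qed.

Lemma In_elems_param D k : (k < n)%N -> List.In (v k) (elems D).
Proof.
move=> kn; apply: List.in_or_app; left; apply: List.in_map; apply: In_of_mem.
by rewrite mem_iota.
Qed.

Lemma size_elems D : (n <= size (elems D))%N.
Proof. by rewrite /elems size_cat size_map size_iota leq_addr. Qed.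

Lemma position_lt D m : List.In m (elems D) -> (position m (elems D) < size (elems D))%N.
Proof. by move=> H; case: (nth_position (dom_inh M) H). Qed.

Lemma In_diagram D psi :
  List.In psi (map (atom_formula (elems D)) D ++ param_eqs (elems D)) ->
  (exists2 a, List.In a D & psi = atom_formula (elems D) a) \/
  (exists2 k, (k < n)%N & psi = Eqf A (Var L k) (var_of (elems D) (v k))).
Proof.
move=> H; case: (List.in_app_or _ _ _ H) => /List.in_map_iff [x [<- Hx]].
  by left; exists x.
by right; exists x => //; move/mem_of_In: Hx; rewrite mem_iota.
Qed.

Lemma diagram_qfree D : qfree (diagram D).
Proof.
apply: qfree_bigWedge => psi /In_diagram [[[f ms|p ms|m1 m2] _ ->]|[k _ ->]] //=.
by case: (Defs.decP (m1 = m2)).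
Qed.

Lemma diagram_fv D : fv_in (fun k => (k < size (elems D))%N) (diagram D).
Proof.
apply: fv_bigWedge => psi /In_diagram [[a Ha ->]|[k kn ->]]; last first.
  by split; [exact: leq_trans kn (size_elems D)|apply/position_lt/In_elems_param].
have Hm m : List.In m (atom_elems a) -> (position m (elems D) < size (elems D))%N.
  by move=> H; apply/position_lt/(In_elems_atom Ha).
case: a {Ha} Hm => [f ms|p ms|m1 m2] Hm /=.
- split=> [j|]; apply: Hm; apply: List.in_or_app; [left; exact: In_enum_map|by right; left].
- by split; split=> // j; apply: Hm; exact: In_enum_map.
- by case: (Defs.decP (m1 = m2)) => //=; split=> //; split; apply: Hm => /=; tauto.
Qed.

Lemma refutation_universal D : universal (refutation D).
Proof.
exists (iota n (size (elems D) - n)), (Imp (diagram D) (Cst L (below_top A))).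
by split=> //; split=> //; exact: diagram_qfree.
Qed.

Lemma refutation_fv D : fv_below n (refutation D).
Proof.
apply: fv_closure => /=; split=> //; apply: fv_mono (diagram_fv D) => k ks.
case: (ltnP k n) => kn; [by right|left].
by rewrite mem_iota (subnKC (size_elems D)) kn ks.
Qed.

Definition dvals (D : seq diag_atom) (j : nat) : dom M :=
  if (j < size (elems D))%N then nth (dom_inh M) (elems D) j else v j.

Lemma dvals_position D m : List.In m (elems D) -> dvals D (position m (elems D)) = m.
Proof. by move=> H; have [h1 h2] := nth_position (dom_inh M) H; rewrite /dvals h2 h1. Qed.

Lemma dvals_param D k : (k < n)%N -> dvals D k = v k.
Proof.
move=> kn; rewrite /dvals (leq_trans kn (size_elems D)) /elems nth_cat size_map size_iota kn.
by rewrite (nth_map 0) ?size_iota // nth_iota.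
Qed.

Lemma diagram_dvals D : eval M (dvals D) (diagram D) = \top.
Proof.
apply/eval_bigWedge_top => psi /In_diagram [[a Ha ->]|[k kn ->]]; last first.
  rewrite /= decPT // dvals_param // dvals_position //; exact: In_elems_param.
have Hm m : List.In m (atom_elems a) -> dvals D (position m (elems D)) = m.
  by move=> H; apply/dvals_position/(In_elems_atom Ha).
case: a {Ha} Hm => [f ms|p ms|m1 m2] Hm.
- rewrite /= decPT // Hm; last by apply: List.in_or_app; right; left.
  congr (ifun _); apply: functional_extensionality => j; apply: Hm.
  by apply: List.in_or_app; left; exact: In_enum_map.
- apply/eval_biimp_top => /=; congr (ipred _); apply: functional_extensionality => j.
  by apply: Hm; exact: In_enum_map.
- case: (classic (m1 = m2)) => [e|ne]; first by rewrite /= decPT.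
  rewrite /= decPF //= decPF; first exact/imp_top.
  by rewrite !Hm /=; tauto.
Qed.

Section Nontrivial.
Hypothesis Hnt : (\bot : A) != \top.

Lemma refutation_fails D : eval M v (refutation D) <> \top.
Proof.
move/eval_closure_top => /(_ (dvals D)) H.
have : eval M (dvals D) (Imp (diagram D) (Cst L (below_top A))) = \top.
  apply: H => k nk; rewrite /dvals; case: ifP => // ks.
  have kn : (k < n)%N.
    by rewrite ltnNge; apply: contra nk => nk'; rewrite mem_iota (subnKC (size_elems D)) nk' ks.
  by rewrite -(dvals_param D kn) /dvals ks.
by rewrite /= diagram_dvals => /(imp_below_top Hnt); rewrite ltxx.
Qed.

Lemma refutation_counter (K : structure A L) (w : nat -> dom K) D :
  eval K w (refutation D) <> \top ->
  exists u, (forall k, (k < n)%N -> u k = w k) /\ eval K u (diagram D) = \top.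
Proof.
move=> Hne; apply: NNPP => Hno; apply: Hne; apply/eval_closure_top => u E.
rewrite /= (imp_below_top Hnt) lt_neqAle lex1 andbT; apply/eqP => Htop.
by apply: Hno; exists u; split=> // k kn; apply: E; rewrite mem_iota leqNgt kn.
Qed.

Lemma diagram_atom_top (K : structure A L) (u : nat -> dom K) D a :
  eval K u (diagram D) = \top -> List.In a D -> eval K u (atom_formula (elems D) a) = \top.
Proof.
move/eval_bigWedge_top => H Ha; apply: H; apply: List.in_or_app; left.
exact: List.in_map.
Qed.

Lemma diagram_param_top (K : structure A L) (u : nat -> dom K) D k :
  eval K u (diagram D) = \top -> (k < n)%N -> u k = u (position (v k) (elems D)).
Proof.
move/eval_bigWedge_top => H kn.
have Hk : List.In (Eqf A (Var L k) (var_of (elems D) (v k))) (param_eqs (elems D)).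
  by apply: (List.in_map (fun k => Eqf A _ _)); apply: In_of_mem; rewrite mem_iota.
exact: (eval_Eqf_top Hnt (H _ (List.in_or_app _ _ _ (or_intror Hk)))).
Qed.
End Nontrivial.
End Diagram.

Section DiagramEmbedding.
Variables (disp : Order.disp_t) (A : MTLchain disp) (L : Lang).
Variables (n : nat) (M : structure A L) (v : nat -> dom M).
Hypothesis Hnt : (\bot : A) != \top.
Variables (K : seq (diag_atom M) -> structure A L) (u : forall D, nat -> dom (K D)).
Hypothesis K_diagram : forall D, eval (K D) (u D) (diagram n v D) = \top.
Variable U : ultrafilter (seq (diag_atom M)).
Hypothesis U_cones : forall D, U (fun D' => forall a, List.In a D -> List.In a D').

Definition emb (m : dom M) : dom (uprod U K) :=
  uclass U (fun D => u D (position m (elems n v D))).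

Lemma rep_emb m : U (fun D => rep (emb m) D = u D (position m (elems n v D))).
Proof. exact: rep_uclass. Qed.

Lemma atom_holds_ae a :
  U (fun D => eval (K D) (u D) (atom_formula (elems n v D) a) = \top).
Proof.
apply: ultraS (U_cones [:: a]) => D Ha.
by apply: diagram_atom_top (K_diagram D) _; apply: Ha; left.
Qed.

Lemma emb_fun f ms :
  emb (@ifun _ _ _ M f ms) = @ifun _ _ _ (uprod U K) f (fun j => emb (ms j)).
Proof.
apply: uclass_eq.
apply: ultraS (ultraI (atom_holds_ae (DFun ms)) (ultra_all_fin (fun j => rep_emb (ms j)))).
move=> D [/(eval_Eqf_top Hnt) /= <- Hr]; congr (ifun _).
by apply: functional_extensionality => j; rewrite Hr.
Qed.

Lemma emb_pred p ms : @ipred _ _ _ (uprod U K) p (fun j => emb (ms j)) = @ipred _ _ _ M p ms.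
Proof.
apply: ulim_eq.
apply: ultraS (ultraI (atom_holds_ae (DPred ms)) (ultra_all_fin (fun j => rep_emb (ms j)))).
move=> D [/eval_biimp_top /= <- Hr]; congr (ipred _).
by apply: functional_extensionality => j; rewrite Hr.
Qed.

Lemma emb_inj : injective emb.
Proof.
move=> m1 m2 /uclass_inj E; apply: NNPP => ne.
have [D [HD ED]] := ultra_witness (ultraI (atom_holds_ae (DEq m1 m2)) E).
move: HD; rewrite /= decPF // /= decPT // => /imp_top H.
by move: Hnt; rewrite -le1x H.
Qed.

Lemma emb_params : U (fun D => forall k, k \in iota 0 n -> rep (emb (v k)) D = u D k).
Proof.
apply: ultra_all_seq => k; rewrite mem_iota add0n => kn.
by apply: ultraS (rep_emb (v k)) => D ->; rewrite -(diagram_param_top Hnt (K_diagram D) kn).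
Qed.

Lemma sat_emb (Phi : formula A L -> Prop) :
  (forall phi, Phi phi -> fv_below n phi) -> (forall D, sat (K D) Phi (u D)) ->
  sat (uprod U K) Phi (fun k => emb (v k)).
Proof.
move=> HPhi K_Phi phi Pphi; apply: los_top; apply: ultraS emb_params => D HD.
rewrite (eval_agree (HPhi _ Pphi) (w := u D)); first exact: K_Phi.
by move=> k kn; apply: HD; rewrite mem_iota.
Qed.
End DiagramEmbedding.

Section Preservation.
Variables (disp : Order.disp_t) (A : MTLchain disp) (L : Lang).
Variables (T : formula A L -> Prop) (n : nat) (Phi : formula A L -> Prop).

Definition preserved_in_substructures : Prop :=
  forall (N : structure A L) (S : dom N -> Prop) (HS : closedS N S) (s0 : {x | S x}),
    models N T -> models (substr HS s0) T ->
    forall w : nat -> {x | S x},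
      sat N Phi (fun k => proj1_sig (w k)) -> sat (substr HS s0) Phi w.

Definition universally_axiomatized : Prop :=
  exists Theta : formula A L -> Prop,
    (forall theta, Theta theta -> universal theta /\ fv_below n theta) /\
    conseq T Phi Theta /\ conseq T Theta Phi.

Lemma universally_axiomatized_preserved :
  universally_axiomatized -> preserved_in_substructures.
Proof.
case=> Theta [HTh [PhiTh ThPhi]] N S HS s0 HN HSub w Hw.
apply: (ThPhi _ HSub w) => th Tth.
apply: universal_substr; first exact: (proj1 (HTh th Tth)).
exact: (PhiTh N HN _ Hw th Tth).
Qed.

Hypothesis HPhi : forall phi, Phi phi -> fv_below n phi.

Definition universal_consequences (th : formula A L) : Prop :=
  (universal th /\ fv_below n th) /\ conseq T Phi (fun phi => phi = th).

Section FromPreservation.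
Hypothesis HI : preserved_in_substructures.
Variables (M : structure A L) (v : nat -> dom M).
Hypothesis HM : models M T.
Hypothesis HTh : forall th, universal_consequences th -> eval M v th = \top.

(* Every fragment of the diagram of M is realized in a model of T and Phi,
   since its refutation is not among the universal consequences. *)
Lemma diagram_realized (Hnt : (\bot : A) != \top) (D : seq (diag_atom M)) :
  exists p : {K : structure A L & nat -> dom K},
    [/\ models (projT1 p) T, sat (projT1 p) Phi (projT2 p)
      & eval (projT1 p) (projT2 p) (diagram n v D) = \top].
Proof.
have nC : ~ conseq T Phi (fun phi => phi = refutation n v D).
  move=> C; apply: (refutation_fails Hnt (D := D)); apply: HTh.
  by split; first split; [exact: refutation_universal|exact: refutation_fv|].
apply: NNPP => Hno; apply: nC => K HK w Hw _ ->; apply: NNPP => Href.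
have [u [Hu HuD]] := refutation_counter Hnt Href.
apply: Hno; exists (existT _ K u); split=> // phi Pphi /=.
by rewrite -(Hw _ Pphi); apply: (eval_agree (HPhi Pphi)) => k kn; exact: Hu.
Qed.

(* Hence M embeds into an ultraproduct of such models; by (i) the image of
   M, a substructure isomorphic to M, satisfies Phi. *)
Lemma universal_consequences_sat : sat M Phi v.
Proof.
case: (boolP ((\bot : A) == \top)) => [/eqP bot_top|Hnt].
  by move=> phi _; apply/eqP; rewrite -le1x -bot_top le0x.
have [pk Hpk] := boolp.choice (diagram_realized Hnt).
pose K D := projT1 (pk D); pose u D : nat -> dom (K D) := projT2 (pk D).
have K_T D : models (K D) T by case: (Hpk D).
have K_Phi D : sat (K D) Phi (u D) by case: (Hpk D).
have K_diagram D : eval (K D) (u D) (diagram n v D) = \top by case: (Hpk D).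
have [U U_cones] := cone_ultrafilter (diag_atom M).
have Hfun := emb_fun Hnt K_diagram U_cones.
have Hinj := emb_inj Hnt K_diagram U_cones.
have Hpred := emb_pred K_diagram U_cones.
have Hsat := @HI _ _ (image_closed Hfun) _ (models_uprod K_T)
  (models_image Hinj Hpred HM) (fun k => to_image Hfun (v k))
  (sat_emb Hnt K_diagram U HPhi K_Phi).
by move=> phi Pphi; rewrite -(eval_image Hinj Hfun Hpred) Hsat.
Qed.
End FromPreservation.

Lemma preserved_universally_axiomatized :
  preserved_in_substructures -> universally_axiomatized.
Proof.
move=> HI; exists universal_consequences; split; first by move=> th [].
split=> [M HM v Hv th [_ C]|M HM v HTh]; first exact: (C M HM v Hv th erefl).
by apply: universal_consequences_sat => // th Hth; exact: HTh.
Qed.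
End Preservation.

Theorem mainTheorem3 (disp : Order.disp_t) (A : MTLchain disp) (L : Lang)
  (T : formula A L -> Prop) (n : nat) (Phi : formula A L -> Prop)
  (HT : forall phi, T phi -> sentence phi)
  (HPhi : forall phi, Phi phi -> fv_below n phi) :
  (forall (N : structure A L) (S : dom N -> Prop) (HS : closedS N S)
          (s0 : {x | S x}),
      models N T -> models (substr HS s0) T ->
      forall v : nat -> {x | S x},
        sat N Phi (fun k => proj1_sig (v k)) -> sat (substr HS s0) Phi v)
  <->
  (exists Theta : formula A L -> Prop,
      (forall theta, Theta theta -> universal theta /\ fv_below n theta) /\
      conseq T Phi Theta /\ conseq T Theta Phi).
Proof.
split; [exact: preserved_universally_axiomatized|exact: universally_axiomatized_preserved].
Qed.
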